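(* Let $n\ge 5$. Then the metric dimension of $L(n)$ is $n-2$.
   Context: For $n\ge 5$, $H(n)$ is the graph with vertex set $V_1\cup V_2$, where $V_1=\{v_1,\dots,v_n\}$ and $V_2=\{v_iv_j: 1\le i<j\le n\}$, and $v_r$ is adjacent to $v_iv_j$ iff $r\in\{i,j\}$ (no other edges). $L(n)$ is the line graph of $H(n)$: its vertices are the edges of $H(n)$, two being adjacent iff they share an endpoint. $d$ is the shortest-path distance; a set $Q$ of vertices is a resolving set of $G$ if any two distinct vertices $x,y$ satisfy $(d(x,q))_{q\in Q}\neq(d(y,q))_{q\in Q}$; the metric dimension is the minimum size of a resolving set. *)

From mathcomp Require Import all_boot.
Set Implicit Arguments. Unset Strict Implicit. Unset Printing Implicit Defensive.

Fixpoint ball (T : finType) (e : rel T) (k : nat) (x : T) : {set T} :=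
  if k is k'.+1 then
    ball e k' x :|: [set y | [exists z in ball e k' x, e z y]]
  else [set x].

(* shortest-path distance: least k with y within k steps of x.
   (Convention: #|T| if y is unreachable; irrelevant for connected graphs.) *)
Definition dist (T : finType) (e : rel T) (x y : T) : nat :=
  find (fun k => y \in ball e k x) (iota 0 #|T|).

Definition resolving (T : finType) (e : rel T) (Q : {set T}) : bool :=
  [forall x, forall y, (x != y) ==> [exists q in Q, dist e x q != dist e y q]].

(* metric dimension: minimum size of a resolving set (setT is always resolving) *)
Definition metric_dim (T : finType) (e : rel T) : nat :=
  \big[minn/#|T|]_(Q : {set T} | resolving e Q) #|Q|.

Definition is_edge (T : finType) (e : rel T) (E : {set T}) : bool :=
  [exists x, exists y, [&& x != y, e x y & E == [set x; y]]].

Definition line_vert (T : finType) (e : rel T) := {E : {set T} | is_edge e E}.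

Definition line_rel (T : finType) (e : rel T) : rel (line_vert e) :=
  fun E F => (E != F) && (val E :&: val F != set0).

(* V1 = 'I_n (vertex v_r), V2 = 2-subsets {i,j} of 'I_n (vertex v_i v_j) *)
Definition pair_set (n : nat) := {A : {set 'I_n} | #|A| == 2}.

Definition Hvert (n : nat) : finType := ('I_n + pair_set n)%type.

Definition Hrel (n : nat) : rel (Hvert n) :=
  fun u v =>
    match u, v with
    | inl r, inr A => r \in val A
    | inr A, inl r => r \in val A
    | _, _ => false
    end.

Definition Lvert (n : nat) : finType := line_vert (@Hrel n).
Definition Lrel (n : nat) : rel (Lvert n) := @line_rel _ (@Hrel n).

(* A vertex of L(n) is an edge joining v_r to v_r v_s in H(n), i.e. a flag (r, s)
   of distinct points; two flags are adjacent iff they have the same point or are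
   reverses of each other, so all distances are at most 3 and given by [flag_dist].
   Lower bound: fix a point p.  A flag q = (a, b) can only separate (p, s) from
   (p, s') if s or s' is its tag (b if a = p, else a), so a resolving set must tag
   all but at most one of the n - 1 points other than p.
   Upper bound: for distinct points h, h', the n - 2 flags (a, h) with a outside
   {h, h'} resolve L(n): their distances to (r, s) determine first r, then s, as
   soon as there are three such a, i.e. n >= 5. *)

From mathcomp Require Import all_boot zify.
Set Implicit Arguments. Unset Strict Implicit. Unset Printing Implicit Defensive.

Local Ltac eq_cases :=
  repeat (case: eqP => [?|?]; subst; rewrite ?eqxx /=); by [|congruence].

Lemma bigmin_leq (I : finType) (P : pred I) (F : I -> nat) d i :
  P i -> \big[minn/d]_(j | P j) F j <= F i.
Proof.
move=> Pi; rewrite -big_filter.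
have : i \in [seq j <- index_enum I | P j] by rewrite mem_filter Pi mem_index_enum.
elim: (filter _ _) => //= j s IHs; rewrite inE big_cons => /predU1P[<-|/IHs].
  exact: geq_minl.
exact: leq_trans (geq_minr _ _).
Qed.

Lemma find_geq_iota m M : m < M -> find (leq m) (iota 0 M) = m.
Proof.
move=> lt_mM; have -> : M = m + (M - m.+1).+1 by lia.
rewrite iotaD find_cat size_iota /= leqnn addn0.
have /negbTE -> // : ~~ has (leq m) (iota 0 m).
by apply/hasPn => k; rewrite mem_iota /= -ltnNge.
Qed.

Section MetricDimension.
Variables (T : finType) (e : rel T).

Lemma dist_eq0 x y : (dist e x y == 0) = (x == y).
Proof.
have : 0 < #|T| by apply/card_gt0P; exists x.
by rewrite /dist; case: #|T| => //= m _; rewrite in_set1 (eq_sym y); case: (x == y).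
Qed.

Lemma resolvingP (Q : {set T}) :
  reflect (forall x y, x != y -> exists2 q, q \in Q & dist e x q != dist e y q)
          (resolving e Q).
Proof.
apply: (iffP forallP) => [resQ x y xy | resQ x].
  by have /forallP/(_ y)/implyP/(_ xy)/exists_inP := resQ x.
by apply/forallP => y; apply/implyP => /resQ /exists_inP.
Qed.

Lemma resolvingT : resolving e setT.
Proof.
apply/resolvingP => x y xy; exists x; first exact: in_setT.
have /eqP -> : dist e x x == 0 by rewrite dist_eq0.
by rewrite eq_sym dist_eq0 eq_sym.
Qed.

Lemma metric_dim_le (Q : {set T}) : resolving e Q -> metric_dim e <= #|Q|.
Proof. exact: bigmin_leq. Qed.

Lemma metric_dim_ge m : (forall Q, resolving e Q -> m <= #|Q|) -> m <= metric_dim e.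
Proof.
move=> ge_m; apply: (big_ind (leq m)) => [||Q /ge_m //].
  by rewrite -cardsT ge_m ?resolvingT.
by move=> k l mk ml; rewrite leq_min mk.
Qed.

End MetricDimension.

Section DistanceCharacterization.
Variables (T : finType) (e : rel T) (d : T -> T -> nat).
Hypothesis d_eq0 : forall x y, (d x y == 0) = (x == y).
Hypothesis d_edge : forall x y z, e y z -> d x z <= (d x y).+1.
Hypothesis d_pred : forall x y, 0 < d x y -> exists2 z, e z y & (d x z).+1 = d x y.

Lemma mem_ball_d k x y : (y \in ball e k x) = (d x y <= k).
Proof.
elim: k y => [|k IHk] y /=; first by rewrite in_set1 leqn0 d_eq0 eq_sym.
rewrite in_setU in_set IHk; apply/orP/idP => [[/leqW //|/exists_inP[z]]|].
  by rewrite IHk => dxz /d_edge/leq_trans->.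
rewrite leq_eqVlt ltnS => /orP[/eqP dxy|]; last by left.
have [|z ezy dxz] := d_pred (x := x) (y := y); first by rewrite dxy.
by right; apply/exists_inP; exists z; rewrite // IHk -ltnS dxz dxy.
Qed.

Lemma d_level x y i : i <= d x y -> exists z, d x z = i.
Proof.
move/subnK; move: (d x y - i) => k; elim: k y => [|k IHk] y dxy; first by exists y.
have [|z _ dxz] := d_pred (x := x) (y := y); first by rewrite -dxy.
by apply: (IHk z); apply: succn_inj; rewrite dxz -dxy.
Qed.

Lemma d_lt_card x y : d x y < #|T|.
Proof.
rewrite cardE -(size_map (d x)) -[(d x y).+1](size_iota 0).
apply: uniq_leq_size (iota_uniq _ _) _ => i; rewrite mem_iota /= ltnS.
by case/d_level => z <-; apply: map_f; rewrite mem_enum.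
Qed.

Lemma dist_d x y : dist e x y = d x y.
Proof. by rewrite /dist (eq_find (fun k => mem_ball_d k x y)) find_geq_iota ?d_lt_card. Qed.

End DistanceCharacterization.

(* The distance in L(n) between the vertices (v_r, v_r v_s) and (v_a, v_a v_b). *)
Definition flag_dist (T : eqType) (r s a b : T) : nat :=
  if (r == a) && (s == b) then 0
  else if (r == a) || (r == b) && (s == a) then 1
  else if (r == b) || (s == a) then 2
  else 3.

Local Ltac flag_dist_cases := rewrite /flag_dist; eq_cases.

Section FlagDistance.
Variable T : eqType.
Implicit Types p r s a b c d : T.

Lemma flag_dist_eq0 r s a b : (flag_dist r s a b == 0) = (r == a) && (s == b).
Proof. by rewrite /flag_dist; case: (_ && _) => //; case: (_ || _) => //; case: (_ || _). Qed.

Lemma flag_dist_eq1 r s a b :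
  (flag_dist r s a b == 1) = ~~ ((r == a) && (s == b)) && ((r == a) || (r == b) && (s == a)).
Proof. by rewrite /flag_dist; case: (_ && _); case: (_ || _) => //; case: (_ || _). Qed.

Lemma flag_dist_edge r s a b c d : c != d ->
  flag_dist c d a b = 1 -> flag_dist r s a b <= (flag_dist r s c d).+1.
Proof. flag_dist_cases. Qed.

Lemma flag_dist_pred r s a b : r != s -> 0 < flag_dist r s a b ->
  exists c d, [/\ c != d, (flag_dist r s c d).+1 = flag_dist r s a b
                        & flag_dist c d a b = 1].
Proof.
move=> rs; have [d1 _|/eqP d_ne1 pos] := eqVneq (flag_dist r s a b) 1.
  by exists r, s; rewrite d1; split=> //; move: rs; flag_dist_cases.
have [rb|rb] := eqVneq r b; [exists r, a | exists a, r];
  split; move: rs rb d_ne1 pos; flag_dist_cases.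
Qed.

Definition flag_tag p a b := if a == p then b else a.

Lemma flag_dist_twins p s1 s2 a b :
  p != s1 -> p != s2 -> s1 != flag_tag p a b -> s2 != flag_tag p a b ->
  flag_dist p s1 a b = flag_dist p s2 a b.
Proof. rewrite /flag_tag; case: (a =P p) => [->|ap]; flag_dist_cases. Qed.

End FlagDistance.

Section Hub.
Variables (T : finType) (h h' : T).
Hypothesis T_big : 4 < #|T|.

Lemma exists_landmark u v : exists a, [&& a != h, a != h', a != u & a != v].
Proof.
pose s := [:: h; h'; u; v]; have : #|s| < #|T| := leq_ltn_trans (card_size s) T_big.
rewrite -(cardC (mem s)) -addn1 leq_add2l => /card_gt0P[a].
by rewrite !inE !negb_or => /and4P[]; exists a; apply/and4P.
Qed.

Definition hub_equiv r s r' s' :=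
  forall a, a != h -> a != h' -> flag_dist r s a h = flag_dist r' s' a h.

Lemma hub_equiv_sym r s r' s' : hub_equiv r s r' s' -> hub_equiv r' s' r s.
Proof. by move=> f_eq a ah ah'; rewrite f_eq. Qed.

Lemma hub_equiv_pt_landmark r s r' s' : r != s -> r' != s' ->
  hub_equiv r s r' s' -> r != h -> r != h' -> r = r'.
Proof.
move=> rs rs' f_eq rh rh'; have [a /and4P[ah ah' ar a_s]] := exists_landmark r s.
move: (f_eq r rh rh') (f_eq a ah ah'); move: rs rs' rh ah ar a_s; flag_dist_cases.
Qed.

Lemma hub_equiv_pt r s r' s' : r != s -> r' != s' -> hub_equiv r s r' s' -> r = r'.
Proof.
move=> rs rs' f_eq.
have [/andP[rh rh']|r_hub] := boolP ((r != h) && (r != h')).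
  exact: hub_equiv_pt_landmark f_eq rh rh'.
have [/andP[rh rh']|r'_hub] := boolP ((r' != h) && (r' != h')).
  exact/esym/(hub_equiv_pt_landmark rs' rs (hub_equiv_sym f_eq) rh rh').
have [a /and4P[ah ah' a_s a_s']] := exists_landmark s s'.
move: (f_eq a ah ah'); move: r_hub r'_hub ah ah' a_s a_s'; flag_dist_cases.
Qed.

Lemma hub_equiv_other_landmark r s s' : r != s -> r != s' ->
  hub_equiv r s r s' -> s != h -> s != h' -> s = s'.
Proof. move=> rs rs' f_eq sh sh'; move: (f_eq s sh sh'); move: rs rs' sh; flag_dist_cases. Qed.

Lemma hub_equiv_other r s s' : r != s -> r != s' -> hub_equiv r s r s' -> s = s'.
Proof.
move=> rs rs' f_eq.
have [/andP[sh sh']|s_hub] := boolP ((s != h) && (s != h')).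
  exact: hub_equiv_other_landmark f_eq sh sh'.
have [/andP[sh sh']|s'_hub] := boolP ((s' != h) && (s' != h')).
  exact/esym/(hub_equiv_other_landmark rs' rs (hub_equiv_sym f_eq) sh sh').
have [/andP[rh rh']|r_hub] := boolP ((r != h) && (r != h')).
  move: (f_eq r rh rh'); move: rs rs' s_hub s'_hub; flag_dist_cases.
move: rs rs' r_hub s_hub s'_hub; eq_cases.
Qed.

Lemma hub_equiv_inj r s r' s' : r != s -> r' != s' ->
  hub_equiv r s r' s' -> r = r' /\ s = s'.
Proof.
move=> rs rs' f_eq; have rr' := hub_equiv_pt rs rs' f_eq; subst r'.
by split; last exact: hub_equiv_other rs rs' f_eq.
Qed.

End Hub.

Lemma eq_set2 (T : finType) (a b c d : T) :
  ([set a; b] == [set c; d]) = (a == c) && (b == d) || (a == d) && (b == c).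
Proof.
apply/eqP/idP => [/setP E | /orP[] /andP[/eqP-> /eqP->] //]; last exact: setUC.
move: (E a) (E b) (E c) (E d); rewrite !inE; clear E; eq_cases.
Qed.

Lemma setI2_sum (T U : finType) (x x' : T) (y y' : U) :
  ([set inl x; inr y] :&: [set inl x'; inr y'] != set0 :> {set T + U})
  = (x == x') || (y == y').
Proof.
apply/set0Pn/orP => [[[z|z]]|[/eqP<-|/eqP<-]].
- by rewrite !inE -!sum_eqE /= !orbF => /andP[/eqP-> ?]; left.
- by rewrite !inE -!sum_eqE /= => /andP[/eqP-> ?]; right.
- by exists (inl x); rewrite !inE eqxx.
- by exists (inr y); rewrite !inE eqxx orbT.
Qed.

Section Flags.
Variable n : nat.
Implicit Types E F : Lvert n.

Lemma Lvert_flag E :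
  exists (r : 'I_n) (A : pair_set n),
    r \in val A /\ val E = [set inl r; inr A] :> {set Hvert n}.
Proof.
case: E => /= X /existsP[x /existsP[y /and3P[xy exy /eqP->]]].
case: x y xy exy => [r|A] [s|B] //= _ rB; first by exists r, B.
by exists s, A; rewrite setUC.
Qed.

Lemma flag_ptP E : exists r, (inl r : Hvert n) \in val E.
Proof. by have [r [A [_ ->]]] := Lvert_flag E; exists r; rewrite !inE eqxx. Qed.

Lemma flag_pairP E : exists A, (inr A : Hvert n) \in val E.
Proof. by have [r [A [_ ->]]] := Lvert_flag E; exists A; rewrite !inE eqxx orbT. Qed.

Definition flag_pt E : 'I_n := xchoose (flag_ptP E).
Definition flag_pair E : pair_set n := xchoose (flag_pairP E).

Lemma flagE E : flag_pt E \in val (flag_pair E) /\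
  val E = [set inl (flag_pt E); inr (flag_pair E)] :> {set Hvert n}.
Proof.
have [r [A [rA eE]]] := Lvert_flag E.
have := xchooseP (flag_ptP E); have := xchooseP (flag_pairP E).
by rewrite -/(flag_pt E) -/(flag_pair E) eE !inE -!sum_eqE /= orbF => /eqP-> /eqP->.
Qed.

Lemma flag_otherP E :
  exists s, (s != flag_pt E) && (val (flag_pair E) == [set flag_pt E; s]).
Proof.
have [+ _] := flagE E; have /cards2P[x [y [xy ->]]] := valP (flag_pair E).
case/set2P=> ->; [exists y | exists x]; first by rewrite eq_sym xy eqxx.
by rewrite xy setUC eqxx.
Qed.

Definition flag_other E : 'I_n := xchoose (flag_otherP E).

Lemma flag_pairE E : val (flag_pair E) = [set flag_pt E; flag_other E].
Proof. by have /andP[_ /eqP] := xchooseP (flag_otherP E). Qed.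

Lemma flag_pt_other E : flag_pt E != flag_other E.
Proof. by have /andP[] := xchooseP (flag_otherP E); rewrite eq_sym. Qed.

Lemma flag_inj E F : flag_pt E = flag_pt F -> flag_other E = flag_other F -> E = F.
Proof.
move=> ptEF otEF; have pairEF : flag_pair E = flag_pair F.
  by apply: val_inj; rewrite !flag_pairE ptEF otEF.
by apply: val_inj; rewrite (flagE E).2 (flagE F).2 ptEF pairEF.
Qed.

Lemma flag_surj (r s : 'I_n) : r != s -> exists E, flag_pt E = r /\ flag_other E = s.
Proof.
move=> rs; have A_pair : #|[set r; s]| == 2 by rewrite cards2 rs.
pose A : pair_set n := Sub [set r; s] A_pair.
have A_edge : is_edge (@Hrel n) [set inl r; inr A].
  apply/existsP; exists (inl r); apply/existsP; exists (inr A).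
  by rewrite /= !eqxx !inE eqxx.
pose E : Lvert n := Sub _ A_edge; exists E.
have /eqP := (flagE E).2; rewrite eq_set2 -!sum_eqE /= orbF.
case/andP=> /eqP ptE /eqP pairE; split=> //.
move/eqP: (congr1 val pairE); rewrite /= flag_pairE -ptE eq_set2 eqxx /=.
case/orP=> [/eqP // | /andP[/eqP r_other _]].
by have := flag_pt_other E; rewrite -ptE r_other eqxx.
Qed.

Definition Ldist E F := flag_dist (flag_pt E) (flag_other E) (flag_pt F) (flag_other F).

Lemma Lrel_Ldist E F : Lrel E F = (Ldist E F == 1).
Proof.
have E_eq : (E == F) = (flag_pt E == flag_pt F) && (flag_other E == flag_other F).
  by apply/eqP/andP => [->|[/eqP ptEF /eqP otEF]]; [rewrite !eqxx | exact: flag_inj].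
rewrite /Lrel /line_rel E_eq (flagE E).2 (flagE F).2 setI2_sum.
rewrite -[flag_pair E == _]val_eqE !flag_pairE.
by rewrite eq_set2 flag_dist_eq1; case: (flag_pt E == flag_pt F).
Qed.

Lemma dist_Lrel E F : dist (@Lrel n) E F = Ldist E F.
Proof.
apply: dist_d => {E F} [E F | E F G | E F].
- rewrite /Ldist flag_dist_eq0; apply/andP/eqP => [[/eqP ? /eqP ?]|->]; last by rewrite !eqxx.
  exact: flag_inj.
- by rewrite Lrel_Ldist => /eqP; apply: flag_dist_edge; exact: flag_pt_other.
- move=> /(flag_dist_pred (flag_pt_other E))[c [d [cd dEc dcF]]].
  have [G [ptG otG]] := flag_surj cd.
  by exists G; rewrite ?Lrel_Ldist /Ldist ptG otG ?dcF.
Qed.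

Lemma resolving_card_ge Q : resolving (@Lrel n) Q -> n - 2 <= #|Q|.
Proof.
move=> /resolvingP resQ; rewrite leqNgt; apply/negP => ltQ.
have n_gt0 : 0 < n by lia.
pose p : 'I_n := Ordinal n_gt0.
pose tags := [set flag_tag p (flag_pt q) (flag_other q) | q in Q].
have : 1 < #|~: (p |: tags)|.
  rewrite -(ltn_add2l #|p |: tags|) cardsC card_ord addn1.
  have : #|Q|.+3 <= n by lia.
  apply: leq_trans; rewrite !ltnS cardsU1.
  exact: leq_add (leq_b1 _) (leq_imset_card _ _).
case/card_gt1P=> s1 [s2 []]; rewrite !inE !negb_or ![_ == p]eq_sym.
move=> /andP[ps1 s1T] /andP[ps2 s2T] s12.
have [x1 [ptx1 otx1]] := flag_surj ps1; have [x2 [ptx2 otx2]] := flag_surj ps2.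
have [|q qQ] := resQ x1 x2; first by apply: contra_neq s12 => x12; rewrite -otx1 -otx2 x12.
have tag_q : flag_tag p (flag_pt q) (flag_other q) \in tags by exact: imset_f.
rewrite !dist_Lrel /Ldist ptx1 otx1 ptx2 otx2 (flag_dist_twins ps1 ps2) ?eqxx //.
  by apply: contraNneq s1T => ->.
by apply: contraNneq s2T => ->.
Qed.

Variables h h' : 'I_n.

Definition hub_flags := [set E | (flag_other E == h) && (flag_pt E != h')].

Lemma hub_flags_resolving : 4 < n -> resolving (@Lrel n) hub_flags.
Proof.
move=> n_big; apply/resolvingP => x y xy; apply/exists_inP.
apply: contraNT xy => /exists_inPn same; apply/eqP.
have n_big' : 4 < #|'I_n| by rewrite card_ord.
have equiv_xy : hub_equiv h h' (flag_pt x) (flag_other x) (flag_pt y) (flag_other y).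
  move=> a ah ah'; have [q [ptq otq]] := flag_surj ah.
  have qQ : q \in hub_flags by rewrite inE ptq otq eqxx.
  by move/negPn/eqP: (same q qQ); rewrite !dist_Lrel /Ldist ptq otq.
have [] := hub_equiv_inj n_big' (flag_pt_other x) (flag_pt_other y) equiv_xy.
exact: flag_inj.
Qed.

Lemma card_hub_flags : h != h' -> #|hub_flags| <= n - 2.
Proof.
move=> hh'; rewrite -(card_in_imset (f := flag_pt)); last first.
  move=> E F; rewrite !inE => /andP[/eqP otE _] /andP[/eqP otF _] ptEF.
  by apply: flag_inj; rewrite // otE otF.
have : flag_pt @: hub_flags \subset ~: [set h; h'].
  apply/subsetP => _ /imsetP[E + ->]; rewrite !inE => /andP[/eqP otE /negbTE ->].
  by rewrite -otE (negbTE (flag_pt_other E)).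
move/subset_leq_card/leq_trans; apply.
by rewrite cardsCs setCK cards2 hh' card_ord.
Qed.

End Flags.

Theorem theorem3p8 (n : nat) : 5 <= n -> metric_dim (@Lrel n) = n - 2.
Proof.
move=> n_big.
have /card_gt1P[h [h' [_ _ hh']]] : 1 < #|[set: 'I_n]|.
  by rewrite cardsT card_ord (leq_trans _ n_big).
apply/eqP; rewrite eqn_leq (leq_trans (metric_dim_le (hub_flags_resolving h h' n_big))).
- exact/metric_dim_ge/resolving_card_ge.
- exact: card_hub_flags.
Qed.
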